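(* Let $\mathcal{C}$ be a permutation class. If there exists a partial multiplication matrix $M$ whose row-column graph is a cycle such that $\mathcal{C}$ contains $M$-coils of arbitrarily large length, then $\mathcal{C}$ is not labelled well quasi-ordered.
   Context: Permutations are identified with their plots; $\sigma\le\pi$ if $\pi$ has a subsequence order-isomorphic to $\sigma$; a permutation class is a containment-closed set. A gridding matrix has entries in $\{0,1,-1\}$; an $m\times n$ one has $m$ columns, $n$ rows, $M_{ij}$ in column $i$ from the left and row $j$ from the bottom. An $M$-gridding of a permutation $\pi$ of length $L$ is a choice of vertical lines $\tfrac12=v_0\le\dots\le v_m=L+\tfrac12$ and horizontal lines $\tfrac12=h_0\le\dots\le h_n=L+\tfrac12$, not through points of $\pi$, such that in each cell $C_{ij}=\{v_{i-1}<x<v_i,\ h_{j-1}<y<h_j\}$ the points of $\pi$ are absent if $M_{ij}=0$, increasing if $M_{ij}=1$, decreasing if $M_{ij}=-1$; this gives an $M$-gridded permutation $\pi^\#$. The row-column graph $G_M$ is the bipartite graph on $\{1,\dots,m\}\cup\{1',\dots,n'\}$ with edge $ij'$ iff $M_{ij}\neq 0$. $M$ is a partial multiplication matrix if there are fixed $c_1,\dots,c_m,r_1,\dots,r_n\in\{\pm1\}$ with $M_{ij}=c_ir_j$ for each non-zero entry. Column $i$ is oriented left-to-right if $c_i=1$, right-to-left otherwise; row $j$ bottom-to-top if $r_j=1$, top-to-bottom otherwise. The orientation digraph $D_{\pi^\#}$ has the points of $\pi^\#$ as vertices, with $x\to y$ whenever $x,y$ lie in a common column of cells and $x$ precedes $y$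 in that column's orientation, or lie in a common row of cells and $x$ precedes $y$ in that row's orientation. Let $\ell$ be the length of the cycle $G_M$. A gridded $M$-coil is an $M$-gridded permutation of length $n>\ell$ with an ordering $v_1,\dots,v_n$ of its points and a labelling of the $\ell$ non-zero cells by $1,\dots,\ell$ such that (C1) $v_i$ lies in cell $i\bmod\ell$ (residues in $\{1,\dots,\ell\}$); (C2) $v_{i-1}\to v_i$ for $1<i\le n$; (C3) $v_i\to v_{i-\ell-1}$ for $\ell+1<i\le n$; (C4) $v_{\ell+1}\to v_1$. An $M$-coil is a permutation having an $M$-gridding which is a gridded $M$-coil; its length is its number of points. A quasi-order is wqo if every infinite sequence has $x_i\le x_j$ for some $i<j$. For a quasi-order $L$, an $L$-labelled permutation is a permutation with a map from its points to $L$; $(\sigma,\ell_\sigma)\le(\pi,\ell_\pi)$ if some embedding of $\sigma$ in $\pi$ maps each point to one whose label is $\ge$ its own. A set of permutations is labelled well quasi-ordered if its set of $L$-labelled elements is wqo for every wqo $L$. *)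

From mathcomp Require Import all_boot all_order all_algebra all_fingroup.
Set Implicit Arguments. Unset Strict Implicit. Unset Printing Implicit Defensive.
Import GRing.Theory Num.Theory.
Local Open Scope ring_scope.

(* A permutation of length L is a permutation of 'I_L; the point with
   (0-based) position x has (0-based) value p x. *)
Record permutation := Perm { plen : nat; pperm : 'S_plen }.

(* value of the point at position x (x < plen p); identity outside range *)
Definition pval (p : permutation) (x : nat) : nat :=
  if insub x is Some i then val (pperm p i) else x.

Definition embeds (s p : permutation) (f : 'I_(plen s) -> 'I_(plen p)) : Prop :=
  (forall i j : 'I_(plen s), (i < j)%N -> (f i < f j)%N) /\
  (forall i j : 'I_(plen s), (pperm s i < pperm s j)%N = (pperm p (f i) < pperm p (f j))%N).

Definition contained (s p : permutation) : Prop :=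
  exists f : 'I_(plen s) -> 'I_(plen p), embeds f.

Definition perm_class (C : permutation -> Prop) : Prop :=
  forall s p, contained s p -> C p -> C s.

Definition quasi_order (T : Type) (le : T -> T -> Prop) : Prop :=
  (forall x, le x x) /\ (forall x y z, le x y -> le y z -> le x z).

Definition wqo_on (T : Type) (le : T -> T -> Prop) (A : T -> Prop) : Prop :=
  forall x : nat -> T, (forall k, A (x k)) ->
    exists i j : nat, (i < j)%N /\ le (x i) (x j).

Definition wqo (T : Type) (le : T -> T -> Prop) : Prop :=
  quasi_order le /\ wqo_on le (fun _ => True).

Record lperm (L : Type) := LPerm { lp : permutation; llab : 'I_(plen lp) -> L }.
Arguments llab {L} l _.

Definition lperm_le (L : Type) (leL : L -> L -> Prop) (s p : lperm L) : Prop :=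
  exists f : 'I_(plen (lp s)) -> 'I_(plen (lp p)),
    embeds f /\ forall i, leL (llab s i) (llab p (f i)).

Definition labelled_wqo (C : permutation -> Prop) : Prop :=
  forall (L : Type) (leL : L -> L -> Prop), wqo leL ->
    wqo_on (lperm_le leL) (fun q : lperm L => C (lp q)).

(* M i j : entry in column i (from the left) and row j (from the bottom), 0-based *)
Definition gridding_matrix (m n : nat) (M : 'I_m -> 'I_n -> int) : Prop :=
  forall i j, M i j = 0 \/ M i j = 1 \/ M i j = -1.

Definition pmm_with (m n : nat) (M : 'I_m -> 'I_n -> int)
  (c : 'I_m -> int) (r : 'I_n -> int) : Prop :=
  (forall i, c i = 1 \/ c i = -1) /\ (forall j, r j = 1 \/ r j = -1) /\
  (forall i j, M i j != 0 -> M i j = c i * r j).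

(* row-column graph on columns (inl) and rows (inr) *)
Definition rc_edge (m n : nat) (M : 'I_m -> 'I_n -> int) (x y : 'I_m + 'I_n) : bool :=
  match x, y with
  | inl i, inr j => M i j != 0
  | inr j, inl i => M i j != 0
  | _, _ => false
  end.

Definition rc_is_cycle (m n : nat) (M : 'I_m -> 'I_n -> int) : Prop :=
  exists s : seq ('I_m + 'I_n),
    [/\ uniq s, (forall v, v \in s), (3 <= size s)%N &
        forall x y, rc_edge M x y = (y == next s x) || (x == next s y)].

(* number of non-zero cells (= length of the cycle G_M) *)
Definition nz_cells (m n : nat) (M : 'I_m -> 'I_n -> int) : nat :=
  #|[pred ij : 'I_m * 'I_n | M ij.1 ij.2 != 0]|.

(* vertical line k lies at vl k + 1/2, horizontal line k at hl k + 1/2 *)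
Definition in_col (vl : nat -> nat) (i x : nat) : bool := (vl i <= x < vl i.+1)%N.

Definition in_cell (p : permutation) (vl hl : nat -> nat) (i j x : nat) : bool :=
  in_col vl i x && in_col hl j (pval p x).

Definition is_gridding (m n : nat) (M : 'I_m -> 'I_n -> int)
  (p : permutation) (vl hl : nat -> nat) : Prop :=
  [/\ vl 0%N = 0%N, vl m = plen p & (forall k, (k < m)%N -> (vl k <= vl k.+1)%N)] /\
  [/\ hl 0%N = 0%N, hl n = plen p & (forall k, (k < n)%N -> (hl k <= hl k.+1)%N)] /\
      forall (i : 'I_m) (j : 'I_n) x y, (x < plen p)%N -> (y < plen p)%N ->
        in_cell p vl hl i j x -> in_cell p vl hl i j y ->
        [/\ M i j != 0,
            M i j = 1 -> (x < y)%N -> (pval p x < pval p y)%N &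
            M i j = -1 -> (x < y)%N -> (pval p y < pval p x)%N].

Definition orient (m n : nat) (c : 'I_m -> int) (r : 'I_n -> int)
  (p : permutation) (vl hl : nat -> nat) (x y : nat) : Prop :=
  (exists i : 'I_m, [/\ in_col vl i x, in_col vl i y &
      if c i == 1 then (x < y)%N else (y < x)%N]) \/
  (exists j : 'I_n, [/\ in_col hl j (pval p x), in_col hl j (pval p y) &
      if r j == 1 then (pval p x < pval p y)%N else (pval p y < pval p x)%N]).

(* p is an M-coil (w.r.t. the orientations c, r); points are indexed
   0-based: v k is the (k+1)-st point of the ordering, lab i j + 1 the
   label of cell (i,j) *)
Definition is_coil (m n : nat) (M : 'I_m -> 'I_n -> int)
  (c : 'I_m -> int) (r : 'I_n -> int) (p : permutation) : Prop :=
  let l := nz_cells M in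
  let L := plen p in
  (l < L)%N /\
  exists (vl hl : nat -> nat) (v : nat -> nat) (lab : 'I_m -> 'I_n -> nat),
  [/\ is_gridding M p vl hl,
      (forall k, (k < L)%N -> (v k < L)%N) &
      (forall k k', (k < L)%N -> (k' < L)%N -> v k = v k' -> k = k')] /\
  [/\
      (forall i j, M i j != 0 -> (lab i j < l)%N) &
      (forall i j i' j', M i j != 0 -> M i' j' != 0 ->
          lab i j = lab i' j' -> i = i' /\ j = j')] /\
  [/\
      (forall k, (k < L)%N -> exists (i : 'I_m) (j : 'I_n),
          in_cell p vl hl i j (v k) /\ lab i j = (k %% l)%N),
      (forall k, (0 < k < L)%N -> orient c r p vl hl (v k.-1) (v k)),
      (forall k, (l < k < L)%N -> orient c r p vl hl (v k) (v (k - l.+1)%N)) &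
      orient c r p vl hl (v l) (v 0%N)].

From Pilot Require Import Defs.
From mathcomp Require Import all_boot all_order all_algebra all_fingroup zify.
From Stdlib Require Import IndefiniteDescription.
Set Implicit Arguments. Unset Strict Implicit. Unset Printing Implicit Defensive.

(* Label every point of a gridded M-coil by its column, its row, the residue
   modulo l of its index in the coil ordering, and whether it is the first or
   the last point.  There are finitely many labels, so equality of labels is a
   wqo, and it suffices to show that no label-preserving embedding maps a coil
   into a longer one.

   Within a coil, a point v_(t+al) of a later lap lies in the cell of v_t and,
   by (C3) followed by (C2), precedes v_t in the orientation of its column.
   Hence there is no orientation edge v_(k-1) -> v_g with k < g and g = k mod l:
   following (C3) from v_g would reach the cell of v_(k-1) a whole number of
   laps later, at a point lying after v_(k-1).  A label-preserving embedding
   preserves orientation edges, so by induction it sends v_k to v_k; the last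
   point of the shorter coil then lands on a point not labelled last. *)

Lemma in_col_inj (bd : nat -> nat) (K i i' x : nat) :
  (forall k, k < K -> bd k <= bd k.+1) -> i < K -> i' < K ->
  in_col bd i x -> in_col bd i' x -> i = i'.
Proof.
move=> bd_step hi hi' /andP[lo hi_x] /andP[lo' hi_x'].
have bd_mono : {in [pred k | k <= K] &, {homo bd : a b / a <= b}}.
  apply: homo_leq_in => [//|b a d|a b _ bK d /andP[_ db]|a _ a1K].
  - exact: leq_trans.
  - exact: leq_trans (ltnW db) bK.
  - exact: bd_step.
case: (ltngtP i i') => // ltii'.
- have := bd_mono i.+1 i' hi (ltnW hi') ltii'; lia.
- have := bd_mono i'.+1 i hi' (ltnW hi) ltii'; lia.
Qed.

Lemma neq_modn_pred d k : 1 < d -> 0 < k -> k.-1 %% d != k %% d.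
Proof.
move=> d_gt1 k_gt0; rewrite -[in X in _ != X](prednK k_gt0) -addn1 -[X in X %% d]addn0.
by rewrite eqn_modDl mod0n modn_small.
Qed.

Lemma embeds_ltE (s p : permutation) (f : 'I_(plen s) -> 'I_(plen p)) :
  embeds f -> forall x y : 'I_(plen s), (x < y) = (f x < f y).
Proof.
case=> f_incr _ x y; case: (ltngtP x y) => [xy | yx | /val_inj ->].
- by rewrite f_incr.
- by apply/esym/negbTE; rewrite -leqNgt ltnW // f_incr.
- by rewrite ltnn.
Qed.

Lemma embeds_inj (s p : permutation) (f : 'I_(plen s) -> 'I_(plen p)) :
  embeds f -> injective f.
Proof.
move=> f_emb x y fxy; apply: val_inj.
by case: (ltngtP x y) => [||//]; rewrite (embeds_ltE f_emb) fxy ltnn.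
Qed.

Lemma finite_eq_wqo (T : finType) : wqo (@eq T).
Proof.
split; first by split=> // x y z -> ->.
move=> x _; pose y (i : 'I_#|T|.+1) := x i.
have /injectivePn [i [j ij yij]] : ~~ injectiveb y.
  by apply/injectiveP => /leq_card; rewrite card_ord ltnn.
case: (ltngtP i j) => [lt_ij | lt_ji | /val_inj eq_ij]; first by exists i, j.
- by exists j, i.
- by rewrite eq_ij eqxx in ij.
Qed.

Lemma unbounded_sequence (T : Type) (P : T -> Prop) (size : T -> nat) :
  (forall N, exists x, P x /\ N <= size x) ->
  exists s : nat -> T, (forall k, P (s k)) /\ {homo size \o s : i j / i < j}.
Proof.
move=> /(functional_choice (fun N x => P x /\ N <= size x)) [pickN pickNP].
pose s := fix s k := if k is k'.+1 then pickN (size (s k')).+1 else pickN 0.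
exists s; split=> [k | ]; first by case: k => [|k]; exact: (pickNP _).1.
apply: homo_ltn => [y x z | k]; first exact: ltn_trans.
exact: (pickNP _).2.
Qed.

Definition oriented_lt (s : int) (x y : nat) : bool := if s == 1%R then x < y else y < x.

Lemma oriented_lt_trans s : transitive (oriented_lt s).
Proof. rewrite /oriented_lt => y x z; case: ifP => _; lia. Qed.

Lemma oriented_ltxx s x : oriented_lt s x x = false.
Proof. by rewrite /oriented_lt ltnn if_same. Qed.

Lemma pvalE (p : permutation) (x : 'I_(plen p)) : Defs.pval p x = pperm p x.
Proof. by rewrite /Defs.pval valK. Qed.

Lemma pick_eq_unique (T : finType) (P Q : pred T) a :
  P a -> (forall b, P b -> b = a) -> [pick b | P b] = [pick b | Q b] -> Q a.
Proof.
move=> Pa P_uniq; case: pickP => [c /P_uniq -> | /(_ a)]; last by rewrite Pa.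
by case: pickP => // y Qy [->].
Qed.

Section Gridding.
Variables (m n : nat) (M : 'I_m -> 'I_n -> int) (c : 'I_m -> int) (r : 'I_n -> int).
Hypothesis Mcr : pmm_with M c r.
Variables (p : permutation) (vl hl : nat -> nat).
Hypothesis grid : is_gridding M p vl hl.

Local Notation orient := (orient c r p vl hl).
Local Notation in_cell := (in_cell p vl hl).

Lemma gridding_col_uniq (i i' : 'I_m) x : in_col vl i x -> in_col vl i' x -> i = i'.
Proof.
case: grid => [[_ _ vl_step] _] ix i'x; apply: val_inj.
exact: in_col_inj vl_step (ltn_ord i) (ltn_ord i') ix i'x.
Qed.

Lemma gridding_row_uniq (j j' : 'I_n) y : in_col hl j y -> in_col hl j' y -> j = j'.
Proof.
case: grid => [_ [[_ _ hl_step] _]] jy j'y; apply: val_inj.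
exact: in_col_inj hl_step (ltn_ord j) (ltn_ord j') jy j'y.
Qed.

Lemma gridding_cell_nz (i : 'I_m) (j : 'I_n) x :
  x < plen p -> in_cell i j x -> M i j != 0%R.
Proof. by case: grid => _ [_ cells] x_lt ijx; case: (cells i j x x x_lt x_lt ijx ijx). Qed.

Lemma cell_oriented_ltE (i : 'I_m) (j : 'I_n) x y :
  x < plen p -> y < plen p -> in_cell i j x -> in_cell i j y ->
  oriented_lt (c i) x y = oriented_lt (r j) (Defs.pval p x) (Defs.pval p y).
Proof.
case: grid => _ [_ cells] x_lt y_lt ijx ijy.
have [nz incr_xy decr_xy] := cells i j x y x_lt y_lt ijx ijy.
have [_ incr_yx decr_yx] := cells i j y x y_lt x_lt ijy ijx.
case: Mcr => c_sign [r_sign Mcr_ij]; have Mij := Mcr_ij i j nz.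
rewrite /oriented_lt; case: (c_sign i) => ci; case: (r_sign j) => rj;
  rewrite ci rj /= in Mij *; rewrite Mij in incr_xy decr_xy incr_yx decr_yx.
all: case: (ltngtP x y) => [xy|yx|<-]; last by rewrite !ltnn.
all: lia.
Qed.

Lemma orient_in_cellE (i : 'I_m) (j : 'I_n) x y :
  x < plen p -> y < plen p -> in_cell i j x -> in_cell i j y ->
  orient x y <-> oriented_lt (c i) x y.
Proof.
move=> x_lt y_lt ijx ijy; have /andP[ix jx] := ijx; have /andP[iy _] := ijy.
split=> [[[i' [i'x _ xy]] | [j' [j'x _ xy]]] | xy]; last by left; exists i.
- by rewrite (gridding_col_uniq ix i'x).
- by rewrite (cell_oriented_ltE x_lt y_lt ijx ijy) (gridding_row_uniq jx j'x).
Qed.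

Lemma orient_detour (i : 'I_m) (j : 'I_n) a b d :
  a < plen p -> d < plen p -> in_cell i j a -> in_cell i j d -> ~ in_cell i j b ->
  orient a b -> orient b d -> oriented_lt (c i) a d.
Proof.
move=> a_lt d_lt ija ijd ijNb; have /andP[ia ja] := ija; have /andP[id jd] := ijd.
case=> [[i1 [i1a i1b ab]] | [j1 [j1a j1b ab]]];
  case=> [[i2 [i2b i2d bd]] | [j2 [j2b j2d bd]]].
- rewrite -(gridding_col_uniq ia i1a) -(gridding_col_uniq id i2d) in ab bd.
  exact: oriented_lt_trans ab bd.
- by case: ijNb; rewrite /in_cell (gridding_col_uniq ia i1a) (gridding_row_uniq jd j2d) i1b j2b.
- by case: ijNb; rewrite /in_cell (gridding_row_uniq ja j1a) (gridding_col_uniq id i2d) j1b i2b.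
- rewrite -(gridding_row_uniq ja j1a) -(gridding_row_uniq jd j2d) in ab bd.
  by rewrite (cell_oriented_ltE a_lt d_lt ija ijd) (oriented_lt_trans ab bd).
Qed.

End Gridding.

Record gridded_coil (m n : nat) := GriddedCoil {
  coil_perm : permutation;
  coil_vl : nat -> nat;
  coil_hl : nat -> nat;
  coil_order : nat -> nat;
  coil_lab : 'I_m -> 'I_n -> nat }.

Section GriddedCoil.
Variables (m n : nat) (M : 'I_m -> 'I_n -> int) (c : 'I_m -> int) (r : 'I_n -> int).
Variable d : gridded_coil m n.

Local Notation l := (nz_cells M).
Local Notation p := (coil_perm d).
Local Notation L := (plen p).
Local Notation v := (coil_order d).
Local Notation lab := (coil_lab d).
Local Notation orient := (orient c r p (coil_vl d) (coil_hl d)).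
Local Notation in_cell := (in_cell p (coil_vl d) (coil_hl d)).

Record is_gridded_coil : Prop := {
  coil_long : l < L;
  coil_grid : is_gridding M p (coil_vl d) (coil_hl d);
  coil_order_lt : forall k, k < L -> v k < L;
  coil_order_inj : forall k k', k < L -> k' < L -> v k = v k' -> k = k';
  coil_lab_lt : forall i j, M i j != 0%R -> lab i j < l;
  coil_lab_inj : forall i j i' j', M i j != 0%R -> M i' j' != 0%R ->
    lab i j = lab i' j' -> i = i' /\ j = j';
  coil_C1 : forall k, k < L -> exists (i : 'I_m) (j : 'I_n), in_cell i j (v k) /\ lab i j = k %% l;
  coil_C2 : forall k, 0 < k < L -> orient (v k.-1) (v k);
  coil_C3 : forall k, l < k < L -> orient (v k) (v (k - l.+1));
  coil_C4 : orient (v l) (v 0) }.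

End GriddedCoil.

Lemma is_coil_gridded (m n : nat) (M : 'I_m -> 'I_n -> int) (c : 'I_m -> int) (r : 'I_n -> int) p :
  is_coil M c r p -> exists2 d : gridded_coil m n, coil_perm d = p & is_gridded_coil M c r d.
Proof.
case=> l_lt [vl [hl [v [lab [[grid v_lt v_inj] [[lab_lt lab_inj] [C1 C2 C3 C4]]]]]]].
by exists (GriddedCoil p vl hl v lab) => //; split.
Qed.

Section Coil.
Variables (m n : nat) (M : 'I_m -> 'I_n -> int) (c : 'I_m -> int) (r : 'I_n -> int).
Hypothesis Mcr : pmm_with M c r.
Variable d : gridded_coil m n.
Hypothesis coil : is_gridded_coil M c r d.

Local Notation l := (nz_cells M).
Local Notation p := (coil_perm d).
Local Notation L := (plen p).
Local Notation v := (coil_order d).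
Local Notation lab := (coil_lab d).
Local Notation orient := (orient c r p (coil_vl d) (coil_hl d)).
Local Notation in_cell := (in_cell p (coil_vl d) (coil_hl d)).
Local Notation grid := (coil_grid coil).
Local Notation v_lt := (coil_order_lt coil).

Lemma coil_cell_label g (i : 'I_m) (j : 'I_n) :
  g < L -> in_cell i j (v g) -> lab i j = g %% l.
Proof.
move=> g_lt /andP[ig jg]; have [i' [j' [/andP[i'g j'g] <-]]] := coil_C1 coil g_lt.
by rewrite (gridding_col_uniq grid ig i'g) (gridding_row_uniq grid jg j'g).
Qed.

Lemma coil_cell_mod g h (i : 'I_m) (j : 'I_n) :
  g < L -> h < L -> g %% l = h %% l -> in_cell i j (v g) -> in_cell i j (v h).
Proof.
move=> g_lt h_lt gh ijg; have [i' [j' [ijh' lab_h]]] := coil_C1 coil h_lt.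
have nz_ij := gridding_cell_nz grid (v_lt g_lt) ijg.
have nz_ij' := gridding_cell_nz grid (v_lt h_lt) ijh'.
have lab_eq : lab i j = lab i' j' by rewrite lab_h -gh (coil_cell_label g_lt ijg).
by have [-> ->] := coil_lab_inj coil nz_ij nz_ij' lab_eq.
Qed.

Lemma coil_cells_gt1 : 1 < l.
Proof.
have L_gt0 : 0 < L by apply: leq_ltn_trans (coil_long coil).
have [i [j [ij0 _]]] := coil_C1 coil L_gt0.
have l_gt0 : 0 < l.
  by apply/card_gt0P; exists (i, j); have := gridding_cell_nz grid (v_lt L_gt0) ij0.
rewrite ltn_neqAle eq_sym l_gt0 andbT; apply/eqP => l1.
have L_gt1 : 1 < L by move: (coil_long coil); rewrite l1.
have ij1 : in_cell i j (v 1) by apply: (coil_cell_mod L_gt0 L_gt1 _ ij0); rewrite l1.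
have := coil_C4 coil; rewrite l1.
move=> /(orient_in_cellE Mcr grid (v_lt L_gt1) (v_lt L_gt0) ij1 ij0) v10.
have := coil_C2 coil (k := 1) L_gt1.
move=> /(orient_in_cellE Mcr grid (v_lt L_gt0) (v_lt L_gt1) ij0 ij1) v01.
by have := oriented_lt_trans v10 v01; rewrite oriented_ltxx.
Qed.

(* (C3) leads from v (t + l) back to v t.-1, outside the cell, and (C2) returns to v t. *)
Lemma coil_lap_precedes t (i : 'I_m) (j : 'I_n) :
  t + l < L -> in_cell i j (v t) -> oriented_lt (c i) (v (t + l)) (v t).
Proof.
move=> tl_lt ijt; have t_lt : t < L by apply: leq_ltn_trans (leq_addr _ _) tl_lt.
have ijtl : in_cell i j (v (t + l)) by apply: coil_cell_mod ijt; rewrite // modnDr.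
have [t0 | t_gt0] := posnP t.
  subst t; rewrite add0n in tl_lt ijtl *.
  exact/(orient_in_cellE Mcr grid (v_lt tl_lt) (v_lt t_lt) ijtl ijt)/(coil_C4 coil).
have tp_lt : t.-1 < L by apply: leq_ltn_trans (leq_pred t) t_lt.
have back : orient (v (t + l)) (v t.-1).
  by have := coil_C3 coil (k := t + l); rewrite subnS addnK; apply; lia.
apply: (orient_detour Mcr grid (v_lt tl_lt) (v_lt t_lt) ijtl ijt _ back (coil_C2 coil _)); last lia.
move=> /(coil_cell_label tp_lt) lab_tp.
by have := neq_modn_pred coil_cells_gt1 t_gt0; rewrite -lab_tp (coil_cell_label t_lt ijt) eqxx.
Qed.

Lemma coil_laps_precede a t (i : 'I_m) (j : 'I_n) :
  t + a.+1 * l < L -> in_cell i j (v t) -> oriented_lt (c i) (v (t + a.+1 * l)) (v t).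
Proof.
elim: a => [|a IH] tal_lt ijt.
  by rewrite mul1n in tal_lt *; exact: coil_lap_precedes tal_lt ijt.
have split_lap : t + a.+2 * l = t + a.+1 * l + l by rewrite mulSn; lia.
rewrite split_lap in tal_lt *.
have ta_lt : t + a.+1 * l < L by apply: leq_ltn_trans (leq_addr _ _) tal_lt.
have t_lt : t < L by apply: leq_ltn_trans (leq_addr _ _) ta_lt.
have ijta : in_cell i j (v (t + a.+1 * l)).
  by apply: (coil_cell_mod t_lt ta_lt _ ijt); rewrite addnC modnMDl.
exact: oriented_lt_trans (coil_lap_precedes tal_lt ijta) (IH ta_lt ijt).
Qed.

(* (C3) leads from v g back into the cell of v k.-1, a whole number of laps after it. *)
Lemma coil_no_forward_edge k g :
  0 < k -> k < g -> g < L -> g %% l = k %% l -> ~ orient (v k.-1) (v g).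
Proof.
move=> k_gt0 kg g_lt gk fwd.
have /dvdnP [[|a] gka] : l %| g - k by rewrite -eqn_mod_dvd ?(ltnW kg) // gk.
  by move: gka; rewrite mul0n; lia.
rewrite mulSn in gka.
have kp_lt : k.-1 < L by lia.
have q_lt : k.-1 + a * l < L by lia.
have back : orient (v g) (v (k.-1 + a * l)).
  have -> : k.-1 + a * l = g - l.+1 by lia.
  by apply: (coil_C3 coil); lia.
have [i [j [ijk _]]] := coil_C1 coil kp_lt.
have ijq : in_cell i j (v (k.-1 + a * l)).
  by apply: (coil_cell_mod kp_lt q_lt _ ijk); rewrite addnC modnMDl.
have ijNg : ~ in_cell i j (v g).
  move=> /(coil_cell_label g_lt); rewrite (coil_cell_label kp_lt ijk) gk => /eqP.
  by rewrite (negbTE (neq_modn_pred coil_cells_gt1 k_gt0)).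
have kq := orient_detour Mcr grid (v_lt kp_lt) (v_lt q_lt) ijk ijq ijNg fwd back.
case: a => [|a] in gka q_lt back ijq kq.
  by rewrite mul0n addn0 oriented_ltxx in kq.
by have := oriented_lt_trans kq (coil_laps_precede q_lt ijk); rewrite oriented_ltxx.
Qed.

End Coil.

Definition coil_label_type (m n : nat) (M : 'I_m -> 'I_n -> int) : Type :=
  option 'I_m * option 'I_n * option ('I_(nz_cells M).+1 * bool * bool).

Definition coil_label (m n : nat) (M : 'I_m -> 'I_n -> int) (d : gridded_coil m n)
    (x : 'I_(plen (coil_perm d))) : coil_label_type M :=
  let L := plen (coil_perm d) in
  ([pick i : 'I_m | in_col (coil_vl d) i x],
   [pick j : 'I_n | in_col (coil_hl d) j (Defs.pval (coil_perm d) x)],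
   omap (fun k : 'I_L => (inord (k %% nz_cells M), k == 0 :> nat, k == L.-1 :> nat))
        [pick k : 'I_L | coil_order d k == x]).
Arguments coil_label {m n} M d x.

Definition labelled_coil (m n : nat) (M : 'I_m -> 'I_n -> int) (d : gridded_coil m n) :
  lperm (coil_label_type M) := LPerm (coil_label M d).

Section LabelledEmbedding.
Variables (m n : nat) (M : 'I_m -> 'I_n -> int) (c : 'I_m -> int) (r : 'I_n -> int).
Hypothesis Mcr : pmm_with M c r.
Variables (ds dt : gridded_coil m n).
Hypotheses (coil_s : is_gridded_coil M c r ds) (coil_t : is_gridded_coil M c r dt).

Local Notation l := (nz_cells M).
Local Notation ps := (coil_perm ds).
Local Notation pt := (coil_perm dt).
Local Notation Ls := (plen ps).
Local Notation Lt := (plen pt).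
Local Notation vs := (coil_order ds).
Local Notation vt := (coil_order dt).
Local Notation orient_s := (orient c r ps (coil_vl ds) (coil_hl ds)).
Local Notation orient_t := (orient c r pt (coil_vl dt) (coil_hl dt)).

Variable f : 'I_Ls -> 'I_Lt.
Hypotheses (f_emb : embeds f) (f_lab : forall x, coil_label M ds x = coil_label M dt (f x)).

Lemma labelled_embedding_orient (x y : 'I_Ls) : orient_s x y -> orient_t (f x) (f y).
Proof.
have col_f (i : 'I_m) (z : 'I_Ls) : in_col (coil_vl ds) i z -> in_col (coil_vl dt) i (f z).
  move=> iz; apply: (pick_eq_unique (P := fun i' : 'I_m => in_col (coil_vl ds) i' z)
    (Q := fun i' : 'I_m => in_col (coil_vl dt) i' (f z)) iz).
    by move=> i' /(gridding_col_uniq (coil_grid coil_s) iz).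
  by case: (f_lab z).
have row_f (j : 'I_n) (z : 'I_Ls) :
    in_col (coil_hl ds) j (Defs.pval ps z) -> in_col (coil_hl dt) j (Defs.pval pt (f z)).
  move=> jz; apply: (pick_eq_unique (P := fun j' : 'I_n => in_col (coil_hl ds) j' (Defs.pval ps z))
    (Q := fun j' : 'I_n => in_col (coil_hl dt) j' (Defs.pval pt (f z))) jz).
    by move=> j' /(gridding_row_uniq (coil_grid coil_s) jz).
  by case: (f_lab z).
case=> [[i [ix iy xy]] | [j [jx jy xy]]].
- by left; exists i; split; rewrite ?col_f // /oriented_lt -!(embeds_ltE f_emb).
- right; exists j; split; rewrite ?row_f //.
  by case: f_emb => _ fval; move: xy; rewrite !pvalE -!fval.
Qed.

Lemma labelled_embedding_index k (x : 'I_Ls) : k < Ls -> vs k = x ->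
  exists2 g, g < Lt &
    [/\ vt g = f x, g %% l = k %% l, (g == 0) = (k == 0) & (g == Lt.-1) = (k == Ls.-1)].
Proof.
move=> k_lt vkx.
have pick_s : [pick k' : 'I_Ls | vs k' == x] = Some (Ordinal k_lt).
  case: pickP => [k' /eqP vk'x | /(_ (Ordinal k_lt))]; last by rewrite /= vkx eqxx.
  by congr Some; apply/val_inj/(coil_order_inj coil_s (ltn_ord k') k_lt); rewrite vk'x.
have l_gt0 : 0 < l := ltnW (coil_cells_gt1 Mcr coil_t).
move: (f_lab x); rewrite /coil_label pick_s /=.
case: (pickP (fun g : 'I_Lt => vt g == f x)) => [g /eqP vgx | _ /(congr1 snd) //].
move=> [= _ _ res first last].
exists g => //; split=> //.
have mod_lt j : j %% l < l.+1 by rewrite ltnS ltnW // ltn_pmod.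
by move: res => /(congr1 (@nat_of_ord _)); rewrite !inordK.
Qed.

Lemma labelled_embedding_fixes_order k (x : 'I_Ls) : k < Ls -> vs k = x -> f x = vt k :> nat.
Proof.
elim/ltn_ind: k x => k IH x k_lt vkx.
have [g g_lt [vgx gk g0 _]] := labelled_embedding_index k_lt vkx.
case: (ltngtP g k) => [g_lt_k | k_lt_g | <-]; last by rewrite vgx.
- have gs_lt : g < Ls := ltn_trans g_lt_k k_lt.
  have := IH g g_lt_k (Ordinal (coil_order_lt coil_s gs_lt)) gs_lt erefl.
  rewrite vgx => /ord_inj /(embeds_inj f_emb) /(congr1 val) /= vgx_s.
  have g_eq_k := coil_order_inj coil_s gs_lt k_lt (etrans vgx_s (esym vkx)).
  by rewrite g_eq_k ltnn in g_lt_k.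
- have k_gt0 : 0 < k by rewrite lt0n -g0 -lt0n; exact: leq_ltn_trans (leq0n k) k_lt_g.
  have kp_lt : k.-1 < Ls by apply: leq_ltn_trans (leq_pred k) k_lt.
  have edge : orient_s (Ordinal (coil_order_lt coil_s kp_lt)) x.
    by rewrite /= -vkx; apply: (coil_C2 coil_s); rewrite k_gt0.
  move/labelled_embedding_orient: edge.
  have kp_lt_k : k.-1 < k by rewrite ltn_predL.
  rewrite (IH k.-1 kp_lt_k (Ordinal (coil_order_lt coil_s kp_lt)) kp_lt erefl) -vgx.
  by move/(coil_no_forward_edge Mcr coil_t k_gt0 k_lt_g g_lt gk).
Qed.

Lemma labelled_embedding_length : Ls = Lt.
Proof.
have Ls_le_Lt : Ls <= Lt by have := leq_card f (embeds_inj f_emb); rewrite !card_ord.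
have last_lt : Ls.-1 < Ls by rewrite ltn_predL; apply: leq_ltn_trans (coil_long coil_s).
pose x_last := Ordinal (coil_order_lt coil_s last_lt).
have [g g_lt [vgx _ _ glast]] := labelled_embedding_index last_lt (erefl : vs Ls.-1 = x_last).
have := labelled_embedding_fixes_order last_lt (erefl : vs Ls.-1 = x_last).
rewrite -vgx => /(coil_order_inj coil_t g_lt (leq_trans last_lt Ls_le_Lt)) g_eq.
move: glast; rewrite g_eq eqxx => /eqP; lia.
Qed.

End LabelledEmbedding.

Lemma labelled_coil_le_length (m n : nat) (M : 'I_m -> 'I_n -> int) (c : 'I_m -> int)
    (r : 'I_n -> int) (ds dt : gridded_coil m n) :
  pmm_with M c r -> is_gridded_coil M c r ds -> is_gridded_coil M c r dt ->
  lperm_le eq (labelled_coil M ds) (labelled_coil M dt) ->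
  plen (coil_perm ds) = plen (coil_perm dt).
Proof.
move=> Mcr coil_s coil_t [f [f_emb f_lab]].
exact (labelled_embedding_length Mcr coil_s coil_t f_emb f_lab).
Qed.

Local Open Scope ring_scope.

Theorem proposition4p12 (C : permutation -> Prop) :
  perm_class C ->
  forall (m n : nat) (M : 'I_m -> 'I_n -> int) (c : 'I_m -> int) (r : 'I_n -> int),
    gridding_matrix M -> pmm_with M c r -> rc_is_cycle M ->
    (forall N : nat, exists p, C p /\ (N <= plen p)%N /\ is_coil M c r p) ->
    ~ labelled_wqo C.
Proof.
(* Closure of C, the entries of M and the cycle shape of G_M play no role here. *)
move=> _ m n M c r _ Mcr _ long_coils lwqo.
have [s [s_coil s_incr]] : exists s : nat -> gridded_coil m n,
    (forall k, C (coil_perm (s k)) /\ is_gridded_coil M c r (s k)) /\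
    {homo (fun d => plen (coil_perm d)) \o s : i j / (i < j)%N}.
  apply: (unbounded_sequence (P := fun d => C (coil_perm d) /\ is_gridded_coil M c r d)) => N.
  have [p [Cp [Np /is_coil_gridded [d dp dcoil]]]] := long_coils N.
  by exists d; rewrite dp.
have [i [j [ij sij]]] := lwqo _ _ (finite_eq_wqo _) (labelled_coil M \o s) (fun k => (s_coil k).1).
have := s_incr _ _ ij; rewrite /= (labelled_coil_le_length Mcr (s_coil i).2 (s_coil j).2 sij).
by rewrite ltnn.
Qed.
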